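(* Let $m>1$, $n>0$ and let $P_{m,n}$ be the exponentially $(m,n)$-generic class of presentations $\langle a_1,\dots,a_m\mid r_1,\dots,r_n\rangle$ in which every group $G$ is non-free and every $m$-tuple generating a non-free subgroup of $G$ is Nielsen-equivalent to $(a_1,\dots,a_m)$. Then for every group $G$ defined by a presentation in $P_{m,n}$ and every $m$-generated group $H$, every homomorphism $\phi:H\to G$ satisfies either $\phi(H)=G$ or $\phi(H)$ is free. In particular every such $G$ is co-Hopfian (every injective endomorphism of $G$ is surjective), and every automorphism of $G$ is induced by an automorphism of $F(a_1,\dots,a_m)$.
   Context: Nielsen equivalence of $m$-tuples in $G$ is the equivalence relation generated by the moves $g_i\mapsto g_i^{-1}$, swapping $g_i$ and $g_j$, and $g_i\mapsto g_ig_j$ ($j\ne i$). An automorphism $\beta$ of $G=F/N$ is induced by $\alpha\in\mathrm{Aut}(F)$ if $\beta(wN)=\alpha(w)N$ for all $w\in F$. Exponential $(m,n)$-genericity: with $N(m,n,t)$ the number of presentations with $n$ nontrivial cyclically reduced relators of length $\le t$ and $N_P(m,n,t)$ those in the class, $1-N_P/N\le c^t$ for some $c<1$ and all large $t$. *)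

(* groups are possibly infinite, so we use an
   explicit record of group axioms. *)
From Stdlib Require Import Relations List.
From mathcomp Require Import all_boot.
Set Implicit Arguments. Unset Strict Implicit. Unset Printing Implicit Defensive.

Record group := Group {
  gcar :> Type;
  gmul : gcar -> gcar -> gcar;
  ginv : gcar -> gcar;
  gone : gcar;
  gmulA : forall x y z, gmul x (gmul y z) = gmul (gmul x y) z;
  gmul1 : forall x, gmul gone x = x;
  gmulV : forall x, gmul (ginv x) x = gone }.
Arguments gmul {g}. Arguments ginv {g}. Arguments gone {g}.

Definition is_hom (G K : group) (f : G -> K) : Prop :=
  forall x y, f (gmul x y) = gmul (f x) (f y).

(** Words: a letter (a, false) stands for a, (a, true) for a^-1. *)
Definition evalw (A : Type) (G : group) (f : A -> G) (w : seq (A * bool)) : G :=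
  foldr (fun l acc => gmul (if l.2 then ginv (f l.1) else f l.1) acc) gone w.

Fixpoint reducedP (A : Type) (w : seq (A * bool)) : Prop :=
  match w with
  | x :: ((y :: _) as t) => ~ (y.1 = x.1 /\ y.2 = ~~ x.2) /\ reducedP t
  | _ => True
  end.

Definition cyc_reducedP (A : Type) (w : seq (A * bool)) : Prop :=
  reducedP w /\
  match w with
  | [::] => True
  | x :: _ => ~ ((last x w).1 = x.1 /\ (last x w).2 = ~~ x.2)
  end.

Definition letter (m : nat) := ('I_m * bool)%type.
Definition word (m : nat) := seq (letter m).
Definition inv_letter m (x : letter m) : letter m := (x.1, ~~ x.2).
Definition inv_word m (w : word m) : word m := rev (map (@inv_letter m) w).

(** Equality in the group <a_1..a_m | R>: congruence generated by free
    cancellation and deletion of relators. pres_eq [::] is equality in F. *)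
Inductive pres_eq (m : nat) (R : seq (word m)) : word m -> word m -> Prop :=
| pe_refl w : pres_eq R w w
| pe_sym u v : pres_eq R u v -> pres_eq R v u
| pe_trans u v w : pres_eq R u v -> pres_eq R v w -> pres_eq R u w
| pe_cancel u v x : pres_eq R (u ++ x :: inv_letter x :: v) (u ++ v)
| pe_rel u v r : r \in R -> pres_eq R (u ++ r ++ v) (u ++ v).

(** G, with images g i of the generators a_i, is the group defined by
    <a_1..a_m | R> (i.e. G = F/N, N the normal closure of R, gN = a_i N). *)
Definition presents (m : nat) (R : seq (word m)) (G : group) (g : 'I_m -> G) : Prop :=
  (forall x : G, exists w : word m, evalw g w = x) /\
  (forall w1 w2 : word m, evalw g w1 = evalw g w2 <-> pres_eq R w1 w2).

Definition gen_by (m : nat) (G : group) (t : 'I_m -> G) (x : G) : Prop :=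
  exists w : word m, evalw t w = x.

Definition m_generated (m : nat) (H : group) : Prop :=
  exists h : 'I_m -> H, forall x : H, gen_by h x.

Definition free_subgroup (G : group) (S : G -> Prop) : Prop :=
  exists B : G -> Prop,
    (forall x : G, S x <->
       exists w : seq (G * bool), (forall l, List.In l w -> B l.1) /\ evalw id w = x) /\
    (forall w : seq (G * bool), (forall l, List.In l w -> B l.1) ->
       reducedP w -> w <> [::] -> evalw id w <> gone).

Definition free_group (G : group) : Prop := free_subgroup (fun _ : G => True).

Inductive nielsen_step (m : nat) (G : group) (t t' : 'I_m -> G) : Prop :=
| ns_inv (i : 'I_m) :
    (forall k, t' k = if k == i then ginv (t k) else t k) -> nielsen_step t t'
| ns_swap (i j : 'I_m) :
    (forall k, t' k = if k == i then t j else if k == j then t i else t k) ->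
    nielsen_step t t'
| ns_mul (i j : 'I_m) : i != j ->
    (forall k, t' k = if k == i then gmul (t i) (t j) else t k) ->
    nielsen_step t t'.

Definition nielsen_equiv (m : nat) (G : group) : relation ('I_m -> G) :=
  clos_refl_sym_trans _ (@nielsen_step m G).

Definition substw (m : nat) (a : 'I_m -> word m) (w : word m) : word m :=
  flatten (map (fun x : letter m => if x.2 then inv_word (a x.1) else a x.1) w).

Definition autF (m : nat) (a : 'I_m -> word m) : Prop :=
  exists b : 'I_m -> word m, forall i : 'I_m,
    pres_eq [::] (substw a (b i)) [:: (i, false)] /\
    pres_eq [::] (substw b (a i)) [:: (i, false)].

Definition induced_by (m : nat) (G : group) (g : 'I_m -> G) (beta : G -> G)
  (a : 'I_m -> word m) : Prop :=
  forall w : word m, beta (evalw g w) = evalw g (substw a w).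

(* Each elementary Nielsen move on an m-tuple is precomposition with an
   automorphism of F = F(a_1,...,a_m), hence so is every Nielsen equivalence.
   Given phi : H -> G with H generated by h, the tuple t = phi o h generates
   phi(H).  Either phi(H) is free, or t is Nielsen equivalent to g; then each
   g_i is a word in t and phi(H) = G.  An injective endomorphism f with free
   image would make G, isomorphic to f(G), free; so f is onto.  For an
   automorphism beta, the tuple beta o g generates the non-free group G, and the
   automorphism of F carrying g to beta o g induces beta. *)
From Pilot Require Import Defs.
From Stdlib Require Import Classical.
From mathcomp Require Import all_boot.
(* Not imported: fingroup's [group] would shadow the record [group] of Defs. *)
From mathcomp Require perm.
Set Implicit Arguments. Unset Strict Implicit. Unset Printing Implicit Defensive.

Local Notation free_eq := (pres_eq [::]).

Section GroupTheory.
Variable G : group.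
Implicit Types x y : G.

Lemma gmulrV x : gmul x (ginv x) = gone.
Proof.
rewrite -[LHS]gmul1 -[in LHS](gmulV (ginv x)) -gmulA.
by rewrite (gmulA (ginv x)) gmulV gmul1 gmulV.
Qed.

Lemma gmulr1 x : gmul x gone = x.
Proof. by rewrite -(gmulV x) gmulA gmulrV gmul1. Qed.

Lemma ginv_unique x y : gmul x y = gone -> x = ginv y.
Proof. by move=> xy1; rewrite -[x]gmulr1 -(gmulrV y) gmulA xy1 gmul1. Qed.

Lemma ginvM x y : ginv (gmul x y) = gmul (ginv y) (ginv x).
Proof.
symmetry; apply: ginv_unique.
by rewrite gmulA -(gmulA (ginv y)) gmulV gmulr1 gmulV.
Qed.

Lemma ginv1 : ginv (@gone G) = gone.
Proof. by symmetry; apply: ginv_unique; rewrite gmul1. Qed.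

Lemma ginvK x : ginv (ginv x) = x.
Proof. by symmetry; apply: ginv_unique; rewrite gmulrV. Qed.
End GroupTheory.

Section Homomorphisms.
Variables (G K : group) (f : G -> K).
Hypothesis hom_f : is_hom f.

Lemma hom1 : f gone = gone.
Proof.
have ff1 : gmul (f gone) (f gone) = f gone by rewrite -hom_f gmul1.
by rewrite -(gmulV (f gone)) -{3}ff1 gmulA gmulV gmul1.
Qed.

Lemma homV x : f (ginv x) = ginv (f x).
Proof. by apply: ginv_unique; rewrite -hom_f gmulV hom1. Qed.
End Homomorphisms.

Section Evaluation.
Variables (A : Type) (G : group).
Implicit Types (t : A -> G) (w : seq (A * bool)).

Lemma evalw_cat t u v : evalw t (u ++ v) = gmul (evalw t u) (evalw t v).
Proof. by elim: u => [|l u IH] /=; rewrite ?gmul1 // IH gmulA. Qed.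

Lemma eq_evalw t t' w : t =1 t' -> evalw t w = evalw t' w.
Proof. by move=> tt'; elim: w => [|l w IH] //=; rewrite IH tt'. Qed.

Lemma evalw_hom (K : group) (f : G -> K) t w :
  is_hom f -> evalw (fun a => f (t a)) w = f (evalw t w).
Proof.
move=> hom_f; elim: w => [|[a []] w IH] /=; first by rewrite hom1.
  by rewrite IH hom_f homV.
by rewrite IH hom_f.
Qed.

Lemma evalw_map (B : Type) (h : B -> A) t (w : seq (B * bool)) :
  evalw t (map (fun l => (h l.1, l.2)) w) = evalw (fun b => t (h b)) w.
Proof. by elim: w => [|l w IH] //=; rewrite IH. Qed.
End Evaluation.

Section FreeGroupWords.
Variable m : nat.
Implicit Types (u v w : word m) (a b : 'I_m -> word m).

Lemma inv_letterK : involutive (@inv_letter m).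
Proof. by case=> i e; rewrite /inv_letter /= negbK. Qed.

Lemma inv_word_cat u v : inv_word (u ++ v) = inv_word v ++ inv_word u.
Proof. by rewrite /inv_word map_cat rev_cat. Qed.

Lemma inv_word_cons l w : inv_word (l :: w) = inv_word w ++ [:: inv_letter l].
Proof. by rewrite /inv_word /= rev_cons cats1. Qed.

Lemma inv_wordK : involutive (@inv_word m).
Proof.
by elim=> [|l w IH] //; rewrite inv_word_cons inv_word_cat IH /= inv_letterK.
Qed.

Lemma substw_cons a l w :
  substw a (l :: w) = (if l.2 then inv_word (a l.1) else a l.1) ++ substw a w.
Proof. by []. Qed.

Lemma substw_cat a u v : substw a (u ++ v) = substw a u ++ substw a v.
Proof. by rewrite /substw map_cat flatten_cat. Qed.

Lemma substw1 a i : substw a [:: (i, false)] = a i.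
Proof. by rewrite /substw /= cats0. Qed.

Lemma substw_inv a u : substw a (inv_word u) = inv_word (substw a u).
Proof.
elim: u => [|[i e] u IH] //.
rewrite inv_word_cons substw_cat IH substw_cons inv_word_cat.
by case: e; rewrite /= cats0 ?inv_wordK.
Qed.

Lemma substw_comp a b w :
  substw a (substw b w) = substw (fun i => substw a (b i)) w.
Proof.
elim: w => [|[i e] w IH] //.
by rewrite !substw_cons substw_cat IH; case: e; rewrite ?substw_inv.
Qed.

Lemma evalw_inv (G : group) (t : 'I_m -> G) u :
  evalw t (inv_word u) = ginv (evalw t u).
Proof.
elim: u => [|[i e] u IH] /=; first by rewrite ginv1.
by rewrite inv_word_cons evalw_cat IH ginvM /= gmulr1; case: e; rewrite ?ginvK.
Qed.

Lemma evalw_subst (G : group) (t : 'I_m -> G) a w :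
  evalw t (substw a w) = evalw (fun i => evalw t (a i)) w.
Proof.
elim: w => [|[i e] w IH] //.
by rewrite substw_cons evalw_cat IH; case: e; rewrite /= ?evalw_inv.
Qed.

Lemma evalw_pres_eq (G : group) (t : 'I_m -> G) (R : seq (word m)) u v :
  (forall r, r \in R -> evalw t r = gone) ->
  pres_eq R u v -> evalw t u = evalw t v.
Proof.
move=> tR; elim=> [w|u1 v1 _ ->|u1 v1 w1 _ -> _ ->|u1 v1 [i []]|u1 v1 r /tR] //.
- by rewrite !evalw_cat /= (gmulA (ginv _)) gmulV gmul1.
- by rewrite !evalw_cat /= (gmulA (t i)) gmulrV gmul1.
by rewrite !evalw_cat => ->; rewrite gmul1.
Qed.

Lemma pres_eq_ctx (R : seq (word m)) u v p q :
  pres_eq R u v -> pres_eq R (p ++ u ++ q) (p ++ v ++ q).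
Proof.
move=> uv; elim: uv p q => [w|u1 v1 _ IH|u1 v1 w1 _ IH1 _ IH2|u1 v1 x|u1 v1 r Rr] p q.
- exact: pe_refl.
- exact: pe_sym.
- exact: pe_trans (IH1 p q) (IH2 p q).
- by have := pe_cancel R (p ++ u1) (v1 ++ q) x; rewrite -!catA.
- by have := pe_rel (p ++ u1) (v1 ++ q) Rr; rewrite -!catA.
Qed.

Lemma pres_eq_cat (R : seq (word m)) u u' v v' :
  pres_eq R u u' -> pres_eq R v v' -> pres_eq R (u ++ v) (u' ++ v').
Proof.
move=> uu' vv'; apply: (pe_trans (pres_eq_ctx [::] v uu')).
by have := pres_eq_ctx u' [::] vv'; rewrite !cats0.
Qed.

Lemma pres_eq_cancel_word (R : seq (word m)) x p q :
  pres_eq R (p ++ x ++ inv_word x ++ q) (p ++ q).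
Proof.
elim: x p q => [|l x IH] p q; first exact: pe_refl.
rewrite inv_word_cons -catA /=.
have := IH (rcons p l) (inv_letter l :: q); rewrite -cats1 -!catA /=.
by move/pe_trans; apply; apply: pe_cancel.
Qed.

Lemma free_eq_inv u v : free_eq u v -> free_eq (inv_word u) (inv_word v).
Proof.
elim=> [w|u1 v1 _|u1 v1 w1 _ uv _ vw|u1 v1 x|u1 v1 r] //.
- exact: pe_refl.
- exact: pe_sym.
- exact: pe_trans uv vw.
- rewrite !inv_word_cat !inv_word_cons -!catA /= inv_letterK.
  exact: pe_cancel.
Qed.

Lemma free_eq_substwr a u v : free_eq u v -> free_eq (substw a u) (substw a v).
Proof.
elim=> [w|u1 v1 _|u1 v1 w1 _ uv _ vw|u1 v1 [i e]|u1 v1 r] //.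
- exact: pe_refl.
- exact: pe_sym.
- exact: pe_trans uv vw.
- rewrite !substw_cat !substw_cons /=.
  case: e => /=; last exact: pres_eq_cancel_word.
  by rewrite -{2}(inv_wordK (a i)); apply: pres_eq_cancel_word.
Qed.

Lemma free_eq_substwl a b w :
  (forall i, free_eq (a i) (b i)) -> free_eq (substw a w) (substw b w).
Proof.
move=> ab; elim: w => [|[i e] w IH]; first exact: pe_refl.
rewrite !substw_cons; apply: pres_eq_cat => //.
by case: e; [apply/free_eq_inv/ab | apply: ab].
Qed.
End FreeGroupWords.

Section Automorphisms.
Variable m : nat.
Implicit Types (a b c : 'I_m -> word m) (i j : 'I_m).

Lemma autF_rename (s s' : 'I_m -> 'I_m) :
  cancel s s' -> cancel s' s -> autF (fun i => [:: (s i, false)]).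
Proof.
move=> ss' s's; exists (fun i => [:: (s' i, false)]) => i.
by rewrite !substw1 ss' s's; split; apply: pe_refl.
Qed.

Lemma autF_invert i : autF (fun k => [:: (k, k == i)]).
Proof.
exists (fun k => [:: (k, k == i)]) => k.
by rewrite /substw /=; case: (k == i); split; apply: pe_refl.
Qed.

Lemma autF_transvection i j : i != j ->
  autF (fun k => if k == i then [:: (i, false); (j, false)] else [:: (k, false)]).
Proof.
rewrite eq_sym => /negbTE ji.
exists (fun k => if k == i then [:: (i, false); (j, true)] else [:: (k, false)]) => k.
have [->|/negbTE ki] := eqVneq k i; last by rewrite !substw1 ki; split; apply: pe_refl.
rewrite /substw /= eqxx ji /=; split.
- exact: (pe_cancel _ [:: (i, false)] [::] (j, false)).
- exact: (pe_cancel _ [:: (i, false)] [::] (j, true)).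
Qed.

Lemma autF_comp a c : autF a -> autF c -> autF (fun i => substw a (c i)).
Proof.
move=> [b ab] [d cd].
have cancel_inner x y z j : (forall k, free_eq (substw x (y k)) [:: (k, false)]) ->
    free_eq (substw (fun k => substw z (x k)) (y j)) (z j).
  by move=> xy; rewrite -substw_comp -[z j]substw1; apply: free_eq_substwr.
exists (fun i => substw d (b i)) => i; rewrite !substw_comp; split.
- apply: (pe_trans _ (proj1 (ab i))); apply: free_eq_substwl => j.
  by apply: cancel_inner => k; case: (cd k).
- apply: (pe_trans _ (proj2 (cd i))); apply: free_eq_substwl => j.
  by apply: cancel_inner => k; case: (ab k).
Qed.
End Automorphisms.

(* Viewing tuples as homomorphisms F -> G, t' is t precomposed with the
   automorphism a_i |-> a i of F. *)
Definition aut_related (m : nat) (G : group) (t t' : 'I_m -> G) : Prop :=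
  exists a : 'I_m -> word m, autF a /\ forall i, t' i = evalw t (a i).

Section AutRelated.
Variables (m : nat) (G : group).
Implicit Types t : 'I_m -> G.

Lemma evalw_precomp t t' a :
  (forall i, t' i = evalw t (a i)) -> forall w, evalw t' w = evalw t (substw a w).
Proof. by move=> t'E w; rewrite evalw_subst; apply: eq_evalw. Qed.

Lemma aut_related_refl t : aut_related t t.
Proof.
exists (fun i => [:: (i, false)]); split; last by move=> i /=; rewrite gmulr1.
exact: autF_rename.
Qed.

Lemma aut_related_sym t t' : aut_related t t' -> aut_related t' t.
Proof.
case=> a [[b ab] t'E]; exists b; split; first by exists a => i; have [] := ab i.
move=> i; rewrite (evalw_precomp t'E).
by rewrite (evalw_pres_eq _ (proj1 (ab i))) //= gmulr1.
Qed.

Lemma aut_related_trans t t' t'' :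
  aut_related t t' -> aut_related t' t'' -> aut_related t t''.
Proof.
case=> a [Aa t'E] [c [Ac t''E]]; exists (fun i => substw a (c i)).
by split; [apply: autF_comp|move=> i; rewrite t''E (evalw_precomp t'E)].
Qed.

Lemma nielsen_step_aut_related t t' : nielsen_step t t' -> aut_related t t'.
Proof.
case=> [i t'E|i j t'E|i j ij t'E].
- exists (fun k => [:: (k, k == i)]); split; first exact: autF_invert.
  by move=> k /=; rewrite t'E gmulr1; case: (k == i).
- have swapK := perm.tperm_proof i j.
  exists (fun k => [:: ([fun z => z with i |-> j, j |-> i] k, false)]).
  split; first exact: (autF_rename swapK swapK).
  move=> k /=; rewrite t'E gmulr1.
  by case: (k == i); case: (k == j).
- exists (fun k => if k == i then [:: (i, false); (j, false)] else [:: (k, false)]).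
  split; first exact: autF_transvection.
  by move=> k; rewrite t'E; case: (k == i); rewrite /= ?gmulr1.
Qed.

Lemma nielsen_equiv_aut_related t t' : nielsen_equiv t t' -> aut_related t t'.
Proof.
elim=> [|u|u v _|u v w _ uv _ vw].
- exact: nielsen_step_aut_related.
- exact: aut_related_refl.
- exact: aut_related_sym.
- exact: aut_related_trans uv vw.
Qed.

Lemma aut_related_gen_by t t' x : aut_related t t' -> gen_by t' x -> gen_by t x.
Proof. by case=> a [_ t'E] [w <-]; exists (substw a w); rewrite (evalw_precomp t'E). Qed.
End AutRelated.

Lemma free_subgroup_ext (G : group) (S S' : G -> Prop) :
  (forall x, S x <-> S' x) -> free_subgroup S -> free_subgroup S'.
Proof. by move=> SS' [B [SB freeB]]; exists B; split => // x; rewrite -SS'. Qed.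

Lemma reduced_map (A B : Type) (f : A -> B) (w : seq (A * bool)) :
  injective f -> reducedP w -> reducedP (map (fun l => (f l.1, l.2)) w).
Proof.
move=> inj_f; elim: w => [|x [|y w] IH] //= [xy red_yw]; split; last exact: IH.
by case=> /inj_f e1 e2; apply: xy.
Qed.

Lemma lift_word (A B : Type) (f : A -> B) (w' : seq (B * bool)) :
  (forall l, List.In l w' -> exists y, f y = l.1) ->
  exists w, map (fun l => (f l.1, l.2)) w = w'.
Proof.
elim: w' => [|[b e] w' IH] imw'; first by exists [::].
have [y fy] := imw' _ (or_introl erefl).
have [|w <-] := IH; first by move=> l w'l; apply: imw'; right.
by exists ((y, e) :: w); rewrite /= fy.
Qed.

Lemma free_group_of_free_image (K G : group) (f : K -> G) :
  is_hom f -> injective f -> free_subgroup (fun x : G => exists y, f y = x) ->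
  free_group K.
Proof.
move=> hom_f inj_f [B' [imB' freeB']].
pose fw (w : seq (K * bool)) := map (fun l => (f l.1, l.2)) w.
have evalw_fw w : evalw id (fw w) = f (evalw id w).
  by rewrite evalw_map (evalw_hom _ _ hom_f).
have B'im b : B' b -> exists y, f y = b.
  move=> B'b; apply/imB'; exists [:: (b, false)]; rewrite /= gmulr1.
  by split=> // l [<-|[]].
exists (fun y => B' (f y)); split=> [x|w Bw red_w w_ne1 w1].
  split=> // _; have [w' [B'w' w'x]] := proj1 (imB' (f x)) (ex_intro _ x erefl).
  have [w fww'] := lift_word (fun l w'l => B'im _ (B'w' l w'l)).
  exists w; split; last by apply: inj_f; rewrite -evalw_fw /fw fww'.
  by move=> l wl; apply: (B'w' (f l.1, l.2)); rewrite -fww'; apply: List.in_map.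
apply: (freeB' (fw w)).
- by move=> _ /List.in_map_iff [l [<- wl]]; apply: Bw.
- exact: reduced_map.
- by case: w w_ne1 {Bw red_w w1}.
- by rewrite evalw_fw w1 hom1.
Qed.

Lemma gen_by_hom (m : nat) (H G : group) (h : 'I_m -> H) (phi : H -> G) :
  is_hom phi -> (forall y : H, gen_by h y) ->
  forall x, gen_by (fun i => phi (h i)) x <-> exists y, phi y = x.
Proof.
move=> hom_phi genH x; split=> [[w <-]|[y <-]].
  by exists (evalw h w); rewrite evalw_hom.
by have [w <-] := genH y; exists w; rewrite evalw_hom.
Qed.

Section NielsenRigidGroup.
Variables (m : nat) (G : group) (g : 'I_m -> G).
Hypothesis gen_g : forall x : G, exists w : word m, evalw g w = x.
Hypothesis nonfree_G : ~ free_group G.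
Hypothesis nielsen_g :
  forall t : 'I_m -> G, ~ free_subgroup (gen_by t) -> nielsen_equiv t g.

Lemma nonfree_tuple_generates (t : 'I_m -> G) x :
  ~ free_subgroup (gen_by t) -> gen_by t x.
Proof.
move/nielsen_g/nielsen_equiv_aut_related/aut_related_gen_by; apply.
exact: gen_g.
Qed.

Lemma hom_onto_or_free_image (H : group) : m_generated m H ->
  forall phi : H -> G, is_hom phi ->
    (forall x : G, exists y : H, phi y = x) \/
    free_subgroup (fun x : G => exists y : H, phi y = x).
Proof.
move=> [h genH] phi hom_phi; have imE := gen_by_hom hom_phi genH.
have [free_t|nonfree_t] := classic (free_subgroup (gen_by (fun i => phi (h i)))).
  by right; apply: free_subgroup_ext free_t.
by left=> x; apply/imE/nonfree_tuple_generates.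
Qed.

Lemma injective_hom_surjective (f : G -> G) :
  is_hom f -> injective f -> forall x : G, exists y, f y = x.
Proof.
move=> hom_f inj_f.
have [] // := hom_onto_or_free_image (ex_intro _ g gen_g) hom_f.
by move/(free_group_of_free_image hom_f inj_f)/nonfree_G.
Qed.

Lemma automorphism_induced (beta : G -> G) : is_hom beta -> bijective beta ->
  exists a : 'I_m -> word m, autF a /\ induced_by g beta a.
Proof.
move=> hom_beta [beta' _ betaK].
have imE := gen_by_hom (m := m) hom_beta gen_g.
have nonfree_t : ~ free_subgroup (gen_by (fun i => beta (g i))).
  move=> free_t; apply: nonfree_G; apply: free_subgroup_ext free_t => x.
  by split=> // _; apply/imE; exists (beta' x).
have [a [Aa tE]] := aut_related_sym (nielsen_equiv_aut_related (nielsen_g nonfree_t)).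
exists a; split=> // w.
by rewrite -(evalw_hom _ _ hom_beta) (evalw_precomp tE).
Qed.
End NielsenRigidGroup.

Theorem mainTheorem6 (m n : nat) (hm : 1 < m) (hn : 0 < n)
  (R : seq (word m)) (hsize : size R = n)
  (hrel : forall r, r \in R -> r <> [::] /\ cyc_reducedP r)
  (G : group) (g : 'I_m -> G) (hpres : presents R g)
  (hnonfree : ~ free_group G)
  (hnielsen : forall t : 'I_m -> G,
      ~ free_subgroup (gen_by t) -> nielsen_equiv t g) :
  (forall (H : group), m_generated m H ->
     forall phi : H -> G, is_hom phi ->
       (forall x : G, exists y : H, phi y = x) \/
       free_subgroup (fun x : G => exists y : H, phi y = x)) /\
  (forall f : G -> G, is_hom f -> injective f -> forall x : G, exists y, f y = x) /\
  (forall beta : G -> G, is_hom beta -> bijective beta ->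
     exists a : 'I_m -> word m, autF a /\ induced_by g beta a).
Proof.
have gen_g := proj1 hpres.
split; first exact: hom_onto_or_free_image hnielsen.
split; first exact: injective_hom_surjective hnonfree hnielsen.
exact: automorphism_induced hnonfree hnielsen.
Qed.
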